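(* In the setting described in the context, let $\{x^k\}$, $\{\lambda^k\}$ be generated by the IAL framework, and for each $k\ge1$ let $x(\lambda^k)\in\arg\min_{x\in\mathbb{R}^n}\mathcal{L}_\beta(x;\lambda^k)$. Then for every $k\ge1$, $$\big\|(Ax(\lambda^k)-b)-(Ax^{k+1}-b)\big\|^2\le\frac{\eta_k}{\beta}.$$
   Context: Let $A\in\mathbb{R}^{m\times n}$ and $b\in\mathbb{R}^m$. Let $f:\mathbb{R}^n\to\mathbb{R}$ be convex and differentiable with Lipschitz continuous gradient. Let $g:\mathbb{R}^n\to\mathbb{R}\cup\{+\infty\}$ be a closed proper convex (possibly nonsmooth) function with bounded domain. Fix a penalty parameter $\beta>0$. For $\lambda\in\mathbb{R}^m$, define $$\hat f_\beta(x;\lambda):=f(x)+\langle\lambda,Ax-b\rangle+\tfrac{\beta}{2}\|Ax-b\|^2,\qquad \mathcal{L}_\beta(x;\lambda):=\hat f_\beta(x;\lambda)+g(x).$$ Here $\nabla\hat f_\beta(x;\lambda)$ denotes the gradient of $\hat f_\beta$ with respect to $x$. IAL framework: choose $x^1\in\operatorname{dom} g$, $\lambda^1\in\mathbb{R}^m$, and a nonnegative sequence $\{\eta_k\}$. For $k=1,2,\dots$: find a point $x^{k+1}$ such that $$\max_{x\in\mathbb{R}^n}\Big\{\langle\nabla\hat f_\beta(x^{k+1};\lambda^k),\,x^{k+1}-x\rangle+g(x^{k+1})-g(x)\Big\}\le\eta_k,$$ and then set $\lambda^{k+1}=\lambda^k+\beta(Ax^{k+1}-b)$. *)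

From HB Require Import structures.
From mathcomp Require Import all_boot all_order all_algebra.
From mathcomp Require Import all_classical all_reals all_analysis.
Set Implicit Arguments. Unset Strict Implicit. Unset Printing Implicit Defensive.
Import Order.TTheory GRing.Theory Num.Theory.
Import numFieldNormedType.Exports.
Local Open Scope classical_set_scope.
Local Open Scope ring_scope.

Definition dotv (R : realType) (n : nat) (u v : 'cV[R]_n) : R :=
  \sum_(i < n) u i 0 * v i 0.
Definition enorm (R : realType) (n : nat) (v : 'cV[R]_n) : R :=
  Num.sqrt (dotv v v).

(* Gradient of a (Frechet-)differentiable f : R^n -> R:
   the vector of partial derivatives, i.e. the Riesz representative
   of the differential 'd f x. *)
Definition grad (R : realType) (n : nat) (f : 'cV[R]_n -> R) (x : 'cV[R]_n)
  : 'cV[R]_n := \col_(i < n) ('d f x (delta_mx i 0)).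

Definition convex_fun (R : realType) (n : nat) (f : 'cV[R]_n -> R) : Prop :=
  forall (x y : 'cV[R]_n) (t : R), 0 <= t <= 1 ->
    f (t *: x + (1 - t) *: y) <= t * f x + (1 - t) * f y.

Definition lipschitz_grad (R : realType) (n : nat) (f : 'cV[R]_n -> R) : Prop :=
  exists L : R, forall x y : 'cV[R]_n,
    enorm (grad f x - grad f y) <= L * enorm (x - y).

Definition edom (R : realType) (n : nat) (g : 'cV[R]_n -> \bar R) : set 'cV[R]_n :=
  [set x | (g x < +oo)%E].

Definition closed_efun (R : realType) (n : nat) (g : 'cV[R]_n -> \bar R) : Prop :=
  closed [set p : 'cV[R]_n * R | (g p.1 <= p.2%:E)%E].

Definition proper_efun (R : realType) (n : nat) (g : 'cV[R]_n -> \bar R) : Prop :=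
  (forall x, g x != -oo%E) /\ exists x, (g x < +oo)%E.

Definition convex_efun (R : realType) (n : nat) (g : 'cV[R]_n -> \bar R) : Prop :=
  forall (x y : 'cV[R]_n) (t : R), 0 <= t <= 1 ->
    let z := t *: x + (1 - t) *: y in
    (g z <= t%:E * g x + (1 - t)%:E * g y)%E.

Definition bounded_dom (R : realType) (n : nat) (g : 'cV[R]_n -> \bar R) : Prop :=
  exists M : R, forall x, edom g x -> enorm x <= M.

Definition fhat (R : realType) (m n : nat) (f : 'cV[R]_n -> R) (A : 'M[R]_(m, n))
  (b : 'cV[R]_m) (beta : R) (lam : 'cV[R]_m) (x : 'cV[R]_n) : R :=
  f x + dotv lam (A *m x - b) + beta / 2 * (enorm (A *m x - b)) ^+ 2.

Definition Lbeta (R : realType) (m n : nat) (f : 'cV[R]_n -> R)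
  (g : 'cV[R]_n -> \bar R) (A : 'M[R]_(m, n)) (b : 'cV[R]_m) (beta : R)
  (lam : 'cV[R]_m) (x : 'cV[R]_n) : \bar R :=
  ((fhat f A b beta lam x)%:E + g x)%E.

(* The map x |-> hat f_beta(x; lambda) is convex plus (beta/2) |Ax - b|^2, so it is
   strongly convex with modulus beta/2 with respect to the seminorm |A(p - q)|.  This
   gives two estimates, with D := |(A x(lambda^k) - b) - (A x^{k+1} - b)|^2:
   - the gradient inequality at x^{k+1}, combined with the eta_k-optimality condition
     tested at z = x(lambda^k), bounds L(x^{k+1}) - L(x(lambda^k)) + (beta/2) D by eta_k;
   - the minimality of x(lambda^k), tested along the segment towards x^{k+1}, gives the
     quadratic growth L(x^{k+1}) - L(x(lambda^k)) >= (beta/2) D.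
   Adding them yields beta D <= eta_k. *)
From HB Require Import structures.
From mathcomp Require Import all_boot all_order all_algebra.
From mathcomp Require Import all_classical all_reals all_analysis.
From mathcomp Require Import ring lra.
Set Implicit Arguments. Unset Strict Implicit. Unset Printing Implicit Defensive.
Import Order.TTheory GRing.Theory Num.Theory.
Import numFieldNormedType.Exports.
Local Open Scope classical_set_scope.
Local Open Scope ring_scope.

Lemma ler_of_mul_lt1 (R : realFieldType) (a e : R) :
  (forall t, 0 <= t < 1 -> t * a <= e) -> a <= e.
Proof.
move=> H; have e_ge0 : 0 <= e by rewrite -(mul0r a) H // lexx ltr01.
rewrite leNgt; apply/negP => ea; have a_gt0 : 0 < a by apply: le_lt_trans ea.
set t := (a + e) / (2 * a).
have ta : t * a = (a + e) / 2 by rewrite /t; field; rewrite gt_eqF.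
have t_ge0 : 0 <= t by rewrite divr_ge0; lra.
have t_lt1 : t < 1 by rewrite ltr_pdivrMr ?mulr_gt0 // mul1r; lra.
have := H t; rewrite t_ge0 t_lt1 ta => /(_ isT); lra.
Qed.

Section DotProduct.
Variables (R : realType) (n : nat).
Implicit Types u v w : 'cV[R]_n.

Lemma dotv_ge0 v : 0 <= dotv v v.
Proof. by apply: sumr_ge0 => i _; rewrite -expr2 sqr_ge0. Qed.

Lemma enorm_sqr v : enorm v ^+ 2 = dotv v v.
Proof. by rewrite /enorm sqr_sqrtr // dotv_ge0. Qed.

Lemma dotvNr u v : dotv u (- v) = - dotv u v.
Proof. by rewrite /dotv -sumrN; apply: eq_bigr => i _; rewrite mxE mulrN. Qed.

Lemma dotv_convex_combr u v w t :
  dotv u (t *: v + (1 - t) *: w) = t * dotv u v + (1 - t) * dotv u w.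
Proof.
rewrite /dotv !mulr_sumr -big_split; apply: eq_bigr => i _; rewrite !mxE /=; ring.
Qed.

Lemma dotv_convex_comb v w t :
  dotv (t *: v + (1 - t) *: w) (t *: v + (1 - t) *: w) =
  t * dotv v v + (1 - t) * dotv w w - t * (1 - t) * dotv (v - w) (v - w).
Proof.
rewrite /dotv !mulr_sumr -big_split -sumrB; apply: eq_bigr => i _.
rewrite !mxE /=; ring.
Qed.

Lemma differential_dotv_grad (F : 'cV[R]_n -> R) x v : 'd F x v = dotv (grad F x) v.
Proof.
rewrite /dotv /grad [in LHS](matrix_sum_delta v) linear_sum /=.
apply: eq_bigr => i _; rewrite big_ord1 linearZ /= !mxE mulrC.
by rewrite [j in v i j]ord1.
Qed.

End DotProduct.

Section StrongConvexity.
Variables (R : realType) (n : nat).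
Implicit Types (p q y : 'cV[R]_n) (c : R) (D : 'cV[R]_n -> 'cV[R]_n -> R).

Definition strongly_convex_wrt (h : 'cV[R]_n -> R) c D :=
  forall p q (t : R), 0 <= t <= 1 ->
    h (t *: p + (1 - t) *: q) <= t * h p + (1 - t) * h q - c * (t * (1 - t)) * D p q.

Lemma strongly_convex_grad_le h c D p y :
  strongly_convex_wrt h c D -> differentiable h y ->
  dotv (grad h y) (p - y) <= h p - h y - c * D p y.
Proof.
move=> hsc dh; set v := p - y; set C := h p - h y - c * D p y.
rewrite -differential_dotv_grad -deriveE //.
set quot := fun t : R => t^-1 *: ((h \o shift y) (t *: v) - h y).
have quot_le : forall t, 0 < t <= 1 -> quot t - c * D p y * t <= C.
  move=> t /andP[t_gt0 t_le1]; have := hsc p y t; rewrite ltW //= => /(_ t_le1).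
  have -> : t *: p + (1 - t) *: y = t *: v + y.
    by rewrite /v scalerBr scalerBl scale1r addrA addrAC.
  move=> hle; rewrite /quot /= -(ler_pM2l t_gt0) mulrBr mulrA mulfV ?gt_eqF // mul1r.
  by rewrite /C; nra.
have : (fun t => quot t - c * D p y * t) @ 0^'+ --> 'D_v h y - c * D p y * 0.
  apply: cvgB; first exact/cvg_dnbhs_at_right/diff_derivable.
  by apply: cvgMl_tmp; apply: cvg_at_right_filter; exact: cvg_id.
rewrite mulr0 subr0 => /cvgr_to_le; apply; near=> t; apply: quot_le.
by apply/andP; split; near: t; [exact: nbhs_right_gt | exact: nbhs_right_le].
Unshelve. all: by end_near.
Qed.

Lemma strongly_convex_min_growth h (g : 'cV[R]_n -> \bar R) c D p q gp gq :
  strongly_convex_wrt h c D -> convex_efun g ->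
  g p = gp%:E -> g q = gq%:E ->
  (forall z, ((h p)%:E + g p <= (h z)%:E + g z)%E) ->
  h p + gp + c * D p q <= h q + gq.
Proof.
move=> hsc gcvx gpE gqE pmin; rewrite addrC -lerBrDr.
apply: ler_of_mul_lt1 => t /andP[t_ge0 t_lt1]; set z := t *: p + (1 - t) *: q.
have t01 : 0 <= t <= 1 by rewrite t_ge0 ltW.
have hz := hsc p q t t01.
have gz : (g z <= (t * gp + (1 - t) * gq)%:E)%E.
  by have := gcvx p q t t01; rewrite /= gpE gqE -!EFinM -EFinD.
have hmin : h p + gp <= h z + (t * gp + (1 - t) * gq).
  rewrite -lee_fin EFinD -gpE (EFinD (h z)); apply: le_trans (pmin z) _.
  exact: leeD2l gz.
have t1_gt0 : 0 < 1 - t by lra.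
have : (1 - t) * (t * (c * D p q) - (h q + gq - (h p + gp))) <= 0 by nra.
by rewrite pmulr_rle0 // subr_le0.
Qed.

End StrongConvexity.

Lemma differentiable_sum_ord (R : realType) (V : normedModType R) (p : nat)
  (G : 'I_p -> V -> R) y :
  (forall i, differentiable (G i) y) ->
  differentiable (fun x => \sum_(i < p) G i x) y.
Proof. by move=> dG; rewrite -fct_sumE; apply: differentiable_sum. Qed.

Section AugmentedLagrangian.
Variables (R : realType) (m n : nat) (A : 'M[R]_(m, n)) (b : 'cV[R]_m).
Variables (f : 'cV[R]_n -> R) (beta : R) (lam : 'cV[R]_m).

Lemma differentiable_residual i y :
  differentiable (fun x : 'cV[R]_n => (A *m x - b) i 0) y.
Proof.
have -> : (fun x : 'cV[R]_n => (A *m x - b) i 0) =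
    (fun x => \sum_(j < n) A i j * x j 0) - cst (b i 0).
  by apply/funext => x; rewrite /= !mxE.
apply: differentiableB; last exact: differentiable_cst.
apply: differentiable_sum_ord => j.
have -> : (fun x : 'cV[R]_n => A i j * x j 0) = cst (A i j) * (fun x => x j 0).
  by apply/funext.
by apply: differentiableM; [exact: differentiable_cst | exact: differentiable_coord].
Qed.

Lemma differentiable_fhat y : differentiable f y -> differentiable (fhat f A b beta lam) y.
Proof.
move=> df.
have -> : fhat f A b beta lam =
    f + (fun x => \sum_(i < m) lam i 0 * (A *m x - b) i 0)
      + cst (beta / 2) * (fun x => \sum_(i < m) (A *m x - b) i 0 * (A *m x - b) i 0).
  by apply/funext => x; rewrite /fhat enorm_sqr.
apply: differentiableD; first apply: differentiableD => //.
  apply: differentiable_sum_ord => i; apply: differentiableM.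
    exact: differentiable_cst.
  exact: differentiable_residual.
apply: differentiableM; first exact: differentiable_cst.
by apply: differentiable_sum_ord => i; apply: differentiableM; exact: differentiable_residual.
Qed.

Lemma residual_convex_comb (t : R) p q :
  A *m (t *: p + (1 - t) *: q) - b = t *: (A *m p - b) + (1 - t) *: (A *m q - b).
Proof.
by rewrite mulmxDr -!scalemxAr !scalerBr addrACA -opprD -scalerDl (addrC t) subrK scale1r.
Qed.

Lemma fhat_strongly_convex : convex_fun f ->
  strongly_convex_wrt (fhat f A b beta lam) (beta / 2)
    (fun p q => enorm ((A *m p - b) - (A *m q - b)) ^+ 2).
Proof.
move=> fcvx p q t t01; have := fcvx p q t t01.
rewrite /fhat !enorm_sqr residual_convex_comb dotv_convex_combr dotv_convex_comb.
move=> fle; rewrite -subr_ge0.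
rewrite (_ : _ - _ = t * f p + (1 - t) * f q - f (t *: p + (1 - t) *: q)) ?subr_ge0 //.
by ring.
Qed.

End AugmentedLagrangian.

Lemma EFin_fine_lt_pinfty (R : realDomainType) (e : \bar R) :
  e != -oo%E -> (e < +oo)%E -> e = (fine e)%:E.
Proof. by case: e. Qed.

Theorem lemma2 (R : realType) (m n : nat) (A : 'M[R]_(m, n)) (b : 'cV[R]_m)
  (f : 'cV[R]_n -> R) (g : 'cV[R]_n -> \bar R) (beta : R)
  (x : nat -> 'cV[R]_n) (lam : nat -> 'cV[R]_m) (eta : nat -> R)
  (xl : nat -> 'cV[R]_n) :
  convex_fun f ->
  (forall z, differentiable f z) ->
  lipschitz_grad f ->
  closed_efun g -> proper_efun g -> convex_efun g -> bounded_dom g ->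
  0 < beta ->
  edom g (x 1%N) ->
  (forall k, 0 <= eta k) ->
  (forall k, (1 <= k)%N ->
     (forall z : 'cV[R]_n,
        ((dotv (grad (fhat f A b beta (lam k)) (x k.+1)) (x k.+1 - z))%:E
          + g (x k.+1) - g z <= (eta k)%:E)%E)
     /\ lam k.+1 = lam k + beta *: (A *m x k.+1 - b)) ->
  (forall k, (1 <= k)%N ->
     forall z : 'cV[R]_n,
       (Lbeta f g A b beta (lam k) (xl k) <= Lbeta f g A b beta (lam k) z)%E) ->
  forall k, (1 <= k)%N ->
    enorm ((A *m xl k - b) - (A *m x k.+1 - b)) ^+ 2 <= eta k / beta.
Proof.
move=> fcvx fdiff _ _ [g_ninfty _] gcvx _ beta_gt0 gx1 _ ial xmin k k_ge1.
have [opt _] := ial k k_ge1; have minL := xmin k k_ge1.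
set y := x k.+1 in opt *; set xs := xl k in minL *.
set h := fhat f A b beta (lam k) in opt minL *.
have g1E := EFin_fine_lt_pinfty (g_ninfty (x 1%N)) gx1.
have gyE : g y = (fine (g y))%:E.
  apply: EFin_fine_lt_pinfty => //; move: (opt (x 1%N)) (g_ninfty y); rewrite g1E.
  by case: (g y) => //= r _ _; exact: ltry.
have gxsE : g xs = (fine (g xs))%:E.
  apply: EFin_fine_lt_pinfty => //; move: (minL y) (g_ninfty xs); rewrite /Lbeta gyE.
  by case: (g xs) => //= r _ _; exact: ltry.
have hsc := fhat_strongly_convex A b beta (lam k) fcvx.
have grad_le := strongly_convex_grad_le xs hsc (differentiable_fhat A b beta (lam k) (fdiff y)).
have growth := strongly_convex_min_growth hsc gcvx gxsE gyE minL.
have := opt xs; rewrite gyE gxsE -!EFinD lee_fin -(opprB xs y) dotvNr => opt_xs.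
set D := enorm _ ^+ 2 in grad_le growth *.
rewrite ler_pdivlMr // (_ : D * beta = beta / 2 * D + beta / 2 * D); last by field.
by move: grad_le growth opt_xs; rewrite -/h; lra.
Qed.
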